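(* Let $A,B:\mathbb{R}^n\to\mathbb{R}^n$ be linear operators that are GTP with respect to a totally positive structure $\{K_1,\ldots,K_n\}$. Then $AB$ is GTP with respect to $\{K_1,\ldots,K_n\}$. If moreover one of $A$, $B$ is GSTP and the other is nonsingular (and GTP), then $AB$ is GSTP with respect to $\{K_1,\ldots,K_n\}$. In particular, if $A$ is GTP (respectively, GSTP) with respect to $\{K_1,\ldots,K_n\}$, then $A^m$ is GTP (respectively, GSTP) with respect to the same structure for every natural number $m$.
   Context: A proper cone is a closed convex cone that is pointed and solid. $\wedge^j\mathbb{R}^n$ is the $j$th exterior power of $\mathbb{R}^n$ and $\wedge^jA$ the operator with $(\wedge^jA)(x_1\wedge\cdots\wedge x_j)=Ax_1\wedge\cdots\wedge Ax_j$. An operator $C$ is $K$-nonnegative if $CK\subseteq K$, $K$-positive if $C(K\setminus\{0\})\subseteq\operatorname{int}K$. A totally positive structure is a family $\{K_1,\ldots,K_n\}$ with $K_j\subset\wedge^j\mathbb{R}^n$ a proper cone; $A$ is GTP (resp. GSTP) with respect to it if $\wedge^jA$ is $K_j$-nonnegative (resp. $K_j$-positive) for every $j=1,\ldots,n$. *)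

From HB Require Import structures.
From mathcomp Require Import all_boot all_order all_algebra.
From mathcomp Require Import all_classical all_reals all_analysis.
Set Implicit Arguments. Unset Strict Implicit. Unset Printing Implicit Defensive.
Import Order.TTheory GRing.Theory Num.Theory.
Import numFieldNormedType.Exports.
Local Open Scope classical_set_scope.
Local Open Scope ring_scope.

(** The basis of /\^j R^n is e_{i_1} /\ ... /\ e_{i_j}, i_1 < ... < i_j,
    indexed by the j-element subsets of 'I_n.  We index coordinates by
    [jset n j] and represent elements of /\^j R^n as column vectors
    'cV[R]_#|{: jset n j}| (coordinate p = coefficient of the basis vector
    indexed by enum_val p). *)
Definition jset (n j : nat) := {S : {set 'I_n} | #|S| == j}.

(** the a-th smallest element of the j-subset I *)
Definition jidx (n j : nat) (I : jset n j) (a : 'I_j) : 'I_n :=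
  @enum_val _ (mem (val I)) (cast_ord (esym (eqP (valP I))) a).

Notation wedge R n j := 'cV[R]_(#|{: jset n j}|).

(** The wedge x_1 /\ ... /\ x_j of vectors x : 'I_j -> R^n:
    its coordinates are the j x j minors (Plücker coordinates). *)
Definition wedge_vec (R : comPzRingType) (n j : nat) (x : 'I_j -> 'cV[R]_n)
  : 'cV[R]_(#|{: jset n j}|) :=
  \col_(p < #|{: jset n j}|) \det (\matrix_(a < j, b < j) x b (jidx (enum_val p) a) 0).

(** The j-th compound matrix: matrix of /\^j A in the above basis,
    entry (I,J) = det of the submatrix of A with rows I and columns J.
    (Cauchy–Binet: (/\^j A)(x_1 /\ ... /\ x_j) = A x_1 /\ ... /\ A x_j.) *)
Definition compound (R : comPzRingType) (n : nat) (A : 'M[R]_n) (j : nat)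
  : 'M[R]_(#|{: jset n j}|) :=
  \matrix_(p, q) \det (\matrix_(a < j, b < j)
      A (jidx (enum_val p) a) (jidx (enum_val q) b)).

Definition convex_cone (R : realType) (m : nat) (K : set 'cV[R]_m) : Prop :=
  K 0 /\ (forall x y, K x -> K y -> K (x + y)) /\
  (forall (c : R) x, 0 <= c -> K x -> K (c *: x)).

Definition pointed (R : realType) (m : nat) (K : set 'cV[R]_m) : Prop :=
  forall x, K x -> K (- x) -> x = 0.

Definition solid (R : realType) (m : nat) (K : set 'cV[R]_m) : Prop :=
  exists x, (interior K) x.

Definition proper_cone (R : realType) (m : nat) (K : set 'cV[R]_m) : Prop :=
  convex_cone K /\ closed K /\ pointed K /\ solid K.

Definition K_nonnegative (R : realType) (m : nat) (K : set 'cV[R]_m)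
  (C : 'M[R]_m) : Prop := forall x, K x -> K (C *m x).

Definition K_positive (R : realType) (m : nat) (K : set 'cV[R]_m)
  (C : 'M[R]_m) : Prop := forall x, K x -> x != 0 -> (interior K) (C *m x).

(** A totally positive structure {K_1,...,K_n}: K j is a proper cone in
    /\^j R^n for j = 1..n (values for j = 0 or j > n are irrelevant). *)
Definition TP_structure (R : realType) (n : nat)
  (K : forall j : nat, set (wedge R n j)) : Prop :=
  forall j, (0 < j <= n)%N -> proper_cone (K j).

Definition GTP (R : realType) (n : nat) (K : forall j : nat, set (wedge R n j))
  (A : 'M[R]_n) : Prop :=
  forall j, (0 < j <= n)%N -> K_nonnegative (K j) (compound A j).

Definition GSTP (R : realType) (n : nat) (K : forall j : nat, set (wedge R n j))
  (A : 'M[R]_n) : Prop :=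
  forall j, (0 < j <= n)%N -> K_positive (K j) (compound A j).

(** By the Cauchy–Binet formula the compound matrices are multiplicative,
    [compound (A *m B) j = compound A j *m compound B j], and they send the
    identity to the identity, hence nonsingular matrices to nonsingular ones.
    Everything then reduces to facts about a single cone [K]: products of
    K-nonnegative maps are K-nonnegative; a K-positive map composed with a
    K-positive one stays K-positive because a pointed cone has [0] outside its
    interior; a K-positive map after a nonsingular K-nonnegative one is
    K-positive because the latter keeps nonzero vectors nonzero; and a
    nonsingular K-nonnegative map sends the interior of [K] into itself, since
    the preimage of [K] under its (continuous) inverse is a neighbourhood. *)

From HB Require Import structures.
From mathcomp Require Import all_boot all_order all_algebra.
From mathcomp Require Import all_classical all_reals all_analysis.
From mathcomp Require Import fingroup perm.
Set Implicit Arguments.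
Unset Strict Implicit.
Unset Printing Implicit Defensive.
Import Order.TTheory GRing.Theory Num.Theory.
Import numFieldNormedType.Exports.
Local Open Scope ring_scope.

Section JsetIndex.
Variables n j : nat.
Implicit Type S : jset n j.

Lemma jidx_in S a : jidx S a \in val S.
Proof. exact: (@enum_valP _ (mem (val S))). Qed.

Lemma jidx_inj S : injective (jidx S).
Proof. by move=> a b /enum_val_inj/cast_ord_inj. Qed.

Lemma jidx_onto S x : x \in val S -> exists a, jidx S a = x.
Proof.
move=> xS; exists (cast_ord (eqP (valP S)) (enum_rank_in xS x)).
by rewrite /jidx cast_ordK enum_rankK_in.
Qed.

Lemma jidx_imset S : [set jidx S a | a in 'I_j] = val S.
Proof.
apply/setP=> x; apply/imsetP/idP => [[a _ ->]|/jidx_onto[a <-]].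
  exact: jidx_in.
by exists a.
Qed.

(* An injective [f : 'I_j -> 'I_n] is exactly an enumeration of its image
   [S], composed with a permutation of 'I_j. *)
Definition ffun_of_jset_perm (p : jset n j * 'S_j) : {ffun 'I_j -> 'I_n} :=
  [ffun i => jidx p.1 (p.2 i)].

Lemma ffun_of_jset_perm_inj : injective ffun_of_jset_perm.
Proof.
move=> [S t] [S' t'] E.
have E' a : jidx S (t a) = jidx S' (t' a).
  by move/ffunP: E => /(_ a); rewrite !ffunE.
have ES : S = S'.
  apply: val_inj; rewrite -!jidx_imset.
  apply/setP=> x; apply/imsetP/imsetP => -[a _ ->].
    by exists (t' (t^-1 a))%g => //; rewrite -E' permKV.
  by exists (t (t'^-1 a))%g => //; rewrite E' permKV.
subst S'; congr (_, _); apply/permP => a.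
exact: jidx_inj (E' a).
Qed.

Lemma mem_imset_ffun_of_jset_perm f :
  (f \in ffun_of_jset_perm @: predT) = injectiveb f.
Proof.
apply/imsetP/injectiveP => [[[S t] _ ->] a b|finj].
  by rewrite !ffunE => /jidx_inj /perm_inj.
have cS : #|[set f a | a in 'I_j]| == j by rewrite card_imset // card_ord.
pose S : jset n j := exist (fun X : {set 'I_n} => #|X| == j) _ cS.
pose t0 a := odflt a [pick b | jidx S b == f a].
have t0E a : jidx S (t0 a) = f a.
  rewrite /t0; case: pickP => [b /eqP //|/= H].
  have : f a \in val S by apply/imsetP; exists a.
  by case/jidx_onto => b Eb; move: (H b); rewrite Eb eqxx.
have t0inj : injective t0 by move=> a b Eab; apply: finj; rewrite -!t0E Eab.
exists (S, perm t0inj) => //; apply/ffunP => a /=.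
by rewrite !ffunE permE t0E.
Qed.

Lemma sum_injective_ffun (V : nmodType) (G : {ffun 'I_j -> 'I_n} -> V) :
  \sum_(f : {ffun 'I_j -> 'I_n} | injectiveb f) G f =
  \sum_(S : jset n j) \sum_(t : 'S_j) G [ffun i => jidx S (t i)].
Proof.
rewrite pair_big /=.
transitivity (\sum_(f in ffun_of_jset_perm @: predT) G f).
  by apply: eq_bigl => f; rewrite mem_imset_ffun_of_jset_perm.
rewrite big_imset /=; last by move=> x y _ _; apply: ffun_of_jset_perm_inj.
by apply: eq_bigl => p; rewrite inE.
Qed.

End JsetIndex.

Section CauchyBinet.
Variable R : comPzRingType.
Variables n j : nat.

Lemma det_mulmx_sum_ffun (P : 'M[R]_(j, n)) (Q : 'M[R]_(n, j)) :
  \det (P *m Q) = \sum_(f : {ffun 'I_j -> 'I_n})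
     (\prod_i P i (f i)) * \det (\matrix_(i, k) Q (f i) k).
Proof.
rewrite [in LHS]/determinant.
transitivity (\sum_(s : 'S_j) \sum_(f : {ffun 'I_j -> 'I_n})
   (-1) ^+ s * \prod_i (P i (f i) * Q (f i) (s i))).
  apply: eq_bigr => s _; rewrite -big_distrr /=; congr (_ * _).
  rewrite -(bigA_distr_bigA (fun i k => P i k * Q k (s i))) /=.
  by apply: eq_bigr => i _; rewrite mxE.
rewrite exchange_big; apply: eq_bigr => f _ /=.
rewrite big_distrr /=; apply: eq_bigr => s _.
rewrite big_split /= mulrCA; congr (_ * (_ * _)).
by apply: eq_bigr => i _; rewrite mxE.
Qed.

Lemma cauchy_binet (P : 'M[R]_(j, n)) (Q : 'M[R]_(n, j)) :
  \det (P *m Q) = \sum_(S : jset n j)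
    \det (\matrix_(a, b) P a (jidx S b)) * \det (\matrix_(a, b) Q (jidx S a) b).
Proof.
rewrite det_mulmx_sum_ffun (bigID (fun f : {ffun 'I_j -> 'I_n} => injectiveb f)) /=.
rewrite [X in _ + X]big1 ?addr0; last first.
  move=> f /injectivePn [i1 [i2 Di12 Ef12]].
  by rewrite (determinant_alternate Di12) ?mulr0 // => k; rewrite !mxE Ef12.
rewrite sum_injective_ffun; apply: eq_bigr => S _.
set QS := \matrix_(a, b) Q (jidx S a) b.
transitivity
    (\sum_(t : 'S_j) ((-1) ^+ t * \prod_i P i (jidx S (t i))) * \det QS).
  apply: eq_bigr => t _.
  have -> : \matrix_(i, k) Q ([ffun i0 => jidx S (t i0)] i) k = row_perm t QS.
    by apply/matrixP => a b; rewrite !mxE ffunE.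
  rewrite row_permE det_mulmx det_perm mulrA [_ * (-1) ^+ _]mulrC.
  by congr (_ * _ * _); apply: eq_bigr => i _; rewrite ffunE.
rewrite -big_distrl /=; congr (_ * _).
by apply: eq_bigr => t _; congr (_ * _); apply: eq_bigr => i _; rewrite mxE.
Qed.

Lemma compoundM (A B : 'M[R]_n) :
  compound (A *m B) j = compound A j *m compound B j.
Proof.
apply/matrixP => p q; rewrite !mxE.
pose P := \matrix_(a < j, k < n) A (jidx (enum_val p) a) k.
pose Q := \matrix_(k < n, b < j) B k (jidx (enum_val q) b).
have -> : \matrix_(a < j, b < j)
    (A *m B) (jidx (enum_val p) a) (jidx (enum_val q) b) = P *m Q.
  by apply/matrixP => a b; rewrite !mxE; apply: eq_bigr => k _; rewrite !mxE.
rewrite cauchy_binet (reindex (@enum_rank _)) /=; last first.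
  by apply: onW_bij; apply: enum_rank_bij.
apply: eq_bigr => r _; rewrite !mxE enum_rankK.
by congr (_ * _); congr (\det _); apply/matrixP => a b; rewrite !mxE.
Qed.

Lemma det_row0 m (M : 'M[R]_m) a : (forall b, M a b = 0) -> \det M = 0.
Proof. by move=> Ma; apply: big1 => s _; rewrite (bigD1 a) //= Ma mul0r mulr0. Qed.

Lemma compound1 : compound (1%:M : 'M[R]_n) j = 1%:M.
Proof.
apply/matrixP => p q; rewrite !mxE.
have [<-|pq] := eqVneq p q.
  rewrite (_ : \matrix_(a, b) _ = 1%:M) ?det1 //.
  by apply/matrixP => a b; rewrite !mxE (inj_eq (@jidx_inj _ _ _)).
set I := enum_val p; set J := enum_val q.
have IJ : val I != val J by apply: contra pq => /eqP /val_inj /enum_val_inj ->.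
have cIJ : #|val I| = #|val J| by rewrite (eqP (valP I)) (eqP (valP J)).
have /subsetPn[x xI xJ] : ~~ (val I \subset val J).
  by apply: contra IJ => sIJ; apply/eqP/setP/subset_cardP.
case/jidx_onto: xI => a Ea.
apply: (det_row0 (a := a)) => b; rewrite !mxE.
by case: eqP => // E; move: xJ; rewrite -Ea E jidx_in.
Qed.

End CauchyBinet.

Lemma compound_unitmx (R : comUnitRingType) n j (A : 'M[R]_n) :
  A \in unitmx -> compound A j \in unitmx.
Proof.
move=> uA; have AAinv : compound A j *m compound (invmx A) j = 1%:M.
  by rewrite -compoundM mulmxV // compound1.
by case: (mulmx1_unit AAinv).
Qed.

Section ConeMaps.
Local Open Scope classical_set_scope.
Variable R : realType.
Variable m : nat.
Implicit Types (K : set 'cV[R]_m) (C D : 'M[R]_m).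

Lemma mulmx_continuous D : continuous (fun z : 'cV[R]_m => D *m z).
Proof.
have -> : (fun z : 'cV[R]_m => D *m z) =
          (fun z => \sum_(k < m) z k 0 *: col k D).
  apply: funext => z; apply/matrixP => i l; rewrite mxE summxE.
  by apply: eq_bigr => k _; rewrite !mxE (ord1 l) mulrC.
apply: continuous_big; first exact: add_continuous.
by move=> k _ z; apply: continuousZr_tmp; apply: coord_continuous.
Qed.

(* A neighbourhood of 0 inside K contains both (e/2) x and -(e/2) x. *)
Lemma pointed_interior0 K (x : 'cV[R]_m) : pointed K -> x != 0 -> ~ interior K 0.
Proof.
move=> pK x0 K0.
have K0' : nbhs ((0 : R) *: x) K by rewrite scale0r.
have [e /= e0 He] := @scalel_continuous _ _ x 0 K K0'.
have e2_ball : ball (0 : R) e (e / 2).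
  by rewrite /ball /= sub0r normrN ger0_norm ?divr_ge0 ?(ltW e0) // ltr_pdivrMr
             // ltr_pMr // ltr1n.
have e2N_ball : ball (0 : R) e (- (e / 2)).
  by rewrite /ball /= sub0r opprK ger0_norm ?divr_ge0 ?(ltW e0) // ltr_pdivrMr
             // ltr_pMr // ltr1n.
have /eqP := pK _ (He _ e2_ball) (eq_ind _ K (He _ e2N_ball) _ (scaleNr _ _)).
by rewrite scaler_eq0 (negPf x0) orbF mulf_eq0 invr_eq0 pnatr_eq0 (gt_eqF e0).
Qed.

Lemma K_nonnegative1 K : K_nonnegative K 1%:M.
Proof. by move=> x Kx; rewrite mul1mx. Qed.

Lemma K_nonnegativeM K C D :
  K_nonnegative K C -> K_nonnegative K D -> K_nonnegative K (C *m D).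
Proof. by move=> KC KD x Kx; rewrite -mulmxA; apply/KC/KD. Qed.

Lemma K_positiveM K C D : pointed K ->
  K_positive K C -> K_positive K D -> K_positive K (C *m D).
Proof.
move=> pK KC KD x Kx x0; rewrite -mulmxA.
have IDx := KD x Kx x0.
apply: KC; first exact: interior_subset.
by apply/eqP => Dx0; apply: (pointed_interior0 pK x0); rewrite -Dx0.
Qed.

Lemma K_positiveMunitr K C D : D \in unitmx ->
  K_positive K C -> K_nonnegative K D -> K_positive K (C *m D).
Proof.
move=> uD KC KD x Kx x0; rewrite -mulmxA; apply: KC; first exact: KD.
by apply: contra x0 => /eqP Dx0; rewrite -(mulKmx uD x) Dx0 mulmx0.
Qed.

Lemma unitmx_K_nonnegative_interior K C (y : 'cV[R]_m) :
  C \in unitmx -> K_nonnegative K C -> interior K y -> interior K (C *m y).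
Proof.
move=> uC KC Ky.
have : nbhs (C *m y) [set z | K (invmx C *m z)].
  by apply: (@mulmx_continuous (invmx C) (C *m y)); rewrite mulKmx.
by apply: filterS => z /KC; rewrite mulmxA mulmxV // mul1mx.
Qed.

Lemma K_positiveMunitl K C D : C \in unitmx ->
  K_nonnegative K C -> K_positive K D -> K_positive K (C *m D).
Proof.
move=> uC KC KD x Kx x0; rewrite -mulmxA.
exact: unitmx_K_nonnegative_interior (KD x Kx x0).
Qed.

End ConeMaps.

Section TotallyPositive.
Variables (R : realType) (n : nat).
Variable K : forall j : nat, set (wedge R n j).
Implicit Types A B : 'M[R]_n.

Lemma GTP1 : GTP K 1%:M.
Proof. by move=> j _; rewrite compound1; apply: K_nonnegative1. Qed.

Lemma GTPM A B : GTP K A -> GTP K B -> GTP K (A *m B).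
Proof. by move=> hA hB j hj; rewrite compoundM; apply: K_nonnegativeM (hA j hj) (hB j hj).
Qed.

Lemma GTPX A k : GTP K A -> GTP K (A ^+ k).
Proof.
move=> hA; elim: k => [|k IH]; first by rewrite expr0; apply: GTP1.
by rewrite exprS; apply: GTPM.
Qed.

Lemma GSTPM A B : TP_structure K -> GSTP K A -> GSTP K B -> GSTP K (A *m B).
Proof.
move=> TP hA hB j hj; have [_ [_ [pK _]]] := TP j hj.
by rewrite compoundM; apply: K_positiveM pK (hA j hj) (hB j hj).
Qed.

Lemma GSTPMunitr A B : B \in unitmx -> GSTP K A -> GTP K B -> GSTP K (A *m B).
Proof.
move=> uB sA hB j hj; rewrite compoundM.
exact: K_positiveMunitr (compound_unitmx j uB) (sA j hj) (hB j hj).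
Qed.

Lemma GSTPMunitl A B : A \in unitmx -> GTP K A -> GSTP K B -> GSTP K (A *m B).
Proof.
move=> uA hA sB j hj; rewrite compoundM.
exact: K_positiveMunitl (compound_unitmx j uA) (hA j hj) (sB j hj).
Qed.

Lemma GSTPX A k : TP_structure K -> (0 < k)%N -> GSTP K A -> GSTP K (A ^+ k).
Proof.
move=> TP + hA; elim: k => [//|[_ _|k IH _]]; first by rewrite expr1.
by rewrite exprS; apply: GSTPM => //; apply: IH.
Qed.

End TotallyPositive.

Theorem proposition15 (R : realType) (n : nat)
  (K : forall j : nat, set (wedge R n j)) :
  TP_structure K ->
  (forall A B : 'M[R]_n, GTP K A -> GTP K B -> GTP K (A *m B)) /\
  (forall A B : 'M[R]_n, GTP K A -> GTP K B ->
      ((GSTP K A /\ B \in unitmx) \/ (A \in unitmx /\ GSTP K B)) ->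
      GSTP K (A *m B)) /\
  (forall (A : 'M[R]_n) (m : nat), GTP K A -> GTP K (A ^+ m)) /\
  (forall (A : 'M[R]_n) (m : nat), (0 < m)%N -> GSTP K A -> GSTP K (A ^+ m)).
Proof.
move=> TP; split; first exact: GTPM.
split.
  move=> A B hA hB [[sA uB]|[uA sB]]; first exact: GSTPMunitr.
  exact: GSTPMunitl.
split; first by move=> A m; apply: GTPX.
by move=> A m; apply: GSTPX.
Qed.
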